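(* On the subspace domain $\mathcal S(\mathcal H_V)$ with $(\alpha_s,\gamma_s)$, define for every subspace $Q$: $\llbracket\mathbf{skip}\rrbracket^\#(Q)=Q$; $\llbracket\bar q:=|0\rangle\rrbracket^\#(Q)=\{|0\rangle_{\bar q}\otimes|\psi\rangle:|\psi\rangle\in\lceil\mathrm{Tr}_{\bar q}(Q)\rceil\}$; $\llbracket\bar q\mathrel{*{=}}U\rrbracket^\#(Q)=\{U|\psi\rangle:|\psi\rangle\in Q\}$; $\llbracket\mathbf{assert}\ P[\bar q]\rrbracket^\#(Q)=\mathrm{span}\{P|\psi\rangle:|\psi\rangle\in Q\}$. Each of these is a complete abstraction of the corresponding $\llbracket e\rrbracket$. Moreover, for any program $S$, if $\llbracket S\rrbracket(\rho)=\sum_{k\in K}E_k\rho E_k^\dagger$ is a Kraus representation, then the operator $Q\mapsto\mathrm{span}\{E_k|\psi\rangle:k\in K,|\psi\rangle\in Q\}$ is a complete abstraction of $\llbracket S\rrbracket$, i.e. $\alpha_s(\llbracket S\rrbracket(R))=\mathrm{span}\{E_k|\psi\rangle:k\in K,|\psi\rangle\in\alpha_s(R)\}$ for all $R\subseteq\mathcal D(\mathcal H_V)$.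
   Context: Fix a finite set $V$ of quantum variables, each a qubit with state space $\mathcal H_q\cong\mathbb C^2$; for $W\subseteq V$, $\mathcal H_W=\bigotimes_{q\in W}\mathcal H_q$. Operators and subspaces on $\mathcal H_W$ are identified with their cylindrical extensions to $\mathcal H_V$, and a subspace is identified with its orthogonal projector (so $\mathrm{Tr}_{\bar q}(Q)$ is the partial trace over $\bar q$ of the projector onto $Q$); $P^\perp$ is the orthocomplement; $\lceil\rho\rceil$ is the support of $\rho$. $\mathcal D(\mathcal H_V)$ is the set of partial density operators (positive, trace $\le1$). Programs: $S::=\mathbf{skip}\mid \bar q:=|0\rangle\mid \bar q\mathrel{*{=}}U\mid \mathbf{assert}\ P[\bar q]\mid S_0;S_1\mid \mathbf{if}\ P[\bar q]\ \mathbf{then}\ S_1\ \mathbf{else}\ S_0\ \mathbf{end}\mid\mathbf{while}\ P[\bar q]\ \mathbf{do}\ S\ \mathbf{end}$, with $\bar q=q_1,\dots,q_t$ distinct variables, $U$ unitary on $\mathcal H_{\bar q}$, $P$ a subspace of $\mathcal H_{\bar q}$; the first four forms are the basic commands. Semantics: $\llbracket\mathbf{skip}\rrbracket(\rho)=\rho$; $\llbracket\bar q:=|0\rangle\rrbracket(\rho)=\sum_{i=0}^{2^t-1}|0\rangle_{\bar q}\langle i|\rho|i\rangle_{\bar q}\langle0|$; $\llbracket\bar q\mathrel{*{=}}U\rrbracket(\rho)=U\rho U^\dagger$; $\llbracket\mathbf{assert}\ P[\bar q]\rrbracket(\rho)=P\rho P$; $\llbracket S_0;S_1\rrbracket=\llbracket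 S_1\rrbracket\circ\llbracket S_0\rrbracket$; $\llbracket\mathbf{if}\ P[\bar q]\ \mathbf{then}\ S_1\ \mathbf{else}\ S_0\ \mathbf{end}\rrbracket(\rho)=\llbracket\mathbf{assert}\ P[\bar q];S_1\rrbracket(\rho)+\llbracket\mathbf{assert}\ P^\perp[\bar q];S_0\rrbracket(\rho)$; $\llbracket\mathbf{while}\ P[\bar q]\ \mathbf{do}\ S\ \mathbf{end}\rrbracket(\rho)=\sum_{i\ge0}\llbracket(\mathbf{assert}\ P[\bar q];S)^i;\mathbf{assert}\ P^\perp[\bar q]\rrbracket(\rho)$. Each $\llbracket S\rrbracket$ is a completely positive trace-nonincreasing map and so admits a finite Kraus representation. $\llbracket S\rrbracket(R)=\{\llbracket S\rrbracket(\rho):\rho\in R\}$ for $R\subseteq\mathcal D(\mathcal H_V)$. The subspace domain $\mathcal S(\mathcal H_V)$: all subspaces of $\mathcal H_V$, ordered by inclusion, join $P\vee Q=\mathrm{span}(P\cup Q)$; $\gamma_s(P)=\{\rho:\lceil\rho\rceil\subseteq P\}$, $\alpha_s(R)=\bigvee\{\lceil\rho\rceil:\rho\in R\}$. An operator $f^\#$ on $\mathcal S(\mathcal H_V)$ is a complete abstraction of $f$ if $\alpha_s\circ f=f^\#\circ\alpha_s$. *)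

From HB Require Import structures.
From mathcomp Require Import all_boot all_order all_algebra.
From mathcomp Require Import complex.
From mathcomp Require Import reals.
From Stdlib Require Import ClassicalEpsilon.
Set Implicit Arguments. Unset Strict Implicit. Unset Printing Implicit Defensive.
Import Order.TTheory GRing.Theory Num.Theory.
Local Open Scope ring_scope.

Section QDefs.
Variable R : realType.
Local Notation C := (R[i]).

Definition dag (m p : nat) (A : 'M[C]_(m, p)) : 'M[C]_(p, m) :=
  (map_mx Num.conj A)^T.

Definition vset (m : nat) := 'cV[C]_m -> Prop.

Definition is_subspace (m : nat) (X : vset m) : Prop :=
  X 0 /\ (forall u v, X u -> X v -> X (u + v)) /\ (forall (a : C) u, X u -> X (a *: u)).

Definition span (m : nat) (X : vset m) : vset m :=
  fun v => exists (k : nat) (w : 'I_k -> 'cV[C]_m) (c : 'I_k -> C),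
      (forall i, X (w i)) /\ v = \sum_(i < k) c i *: w i.

Definition supp (m : nat) (M : 'M[C]_m) : vset m :=
  fun v => exists w : 'cV[C]_m, v = M *m w.

Definition ortho (m : nat) (X : vset m) : vset m :=
  fun v => forall w, X w -> (dag w *m v) 0 0 = 0.

Definition is_proj_onto (m : nat) (M : 'M[C]_m) (X : vset m) : Prop :=
  dag M = M /\ M *m M = M /\ (forall v, supp M v <-> X v).
Definition projmx (m : nat) (X : vset m) : 'M[C]_m :=
  epsilon (inhabits 0) (fun M => is_proj_onto M X).

Definition unitary (m : nat) (U : 'M[C]_m) : Prop :=
  dag U *m U = 1%:M /\ U *m dag U = 1%:M.

Definition pdo (m : nat) (rho : 'M[C]_m) : Prop :=
  (forall v : 'cV[C]_m, 0 <= (dag v *m rho *m v) 0 0) /\ \tr rho <= 1.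

Definition cvgC (u : nat -> C) (l : C) : Prop :=
  forall e : C, 0 < e -> exists N, forall k, (N <= k)%N -> `|u k - l| < e.
Definition limmx (m : nat) (u : nat -> 'M[C]_m) : 'M[C]_m :=
  epsilon (inhabits (0 : 'M[C]_m)) (fun l : 'M[C]_m => forall i j, cvgC (fun k => u k i j) (l i j)).

(* V = 'I_n; computational basis states of H_V are assignments V -> bool *)
Definition bst (n : nat) := {ffun 'I_n -> bool}.
Definition qdim (n : nat) := #|{: bst n}|.
Definition idx (n : nat) (x : bst n) : 'I_(qdim n) := enum_rank x.
Definition st (n : nat) (i : 'I_(qdim n)) : bst n := enum_val i.

Definition cvar (n t : nat) (qs : t.-tuple 'I_n) := {v : 'I_n | v \notin qs}.
Definition cbst (n t : nat) (qs : t.-tuple 'I_n) := {ffun cvar qs -> bool}.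
Definition cdim (n t : nat) (qs : t.-tuple 'I_n) := #|{: cbst qs}|.

Definition res (n t : nat) (qs : t.-tuple 'I_n) (x : bst n) : bst t :=
  [ffun j => x (tnth qs j)].
Definition resc (n t : nat) (qs : t.-tuple 'I_n) (x : bst n) : cbst qs :=
  [ffun v => x (val v)].

(* cylindrical extension A (x) I_{V \ qs} of an operator on H_qs *)
Definition ext (n t : nat) (qs : t.-tuple 'I_n) (A : 'M[C]_(qdim t)) : 'M[C]_(qdim n) :=
  \matrix_(i, j)
    if resc qs (st i) == resc qs (st j)
    then A (idx (res qs (st i))) (idx (res qs (st j))) else 0.

Definition ptrace (n t : nat) (qs : t.-tuple 'I_n) (A : 'M[C]_(qdim n))
  : 'M[C]_(cdim qs) :=
  \matrix_(c, c')
    \sum_(x : bst n | resc qs x == enum_val c)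
      \sum_(y : bst n | (resc qs y == enum_val c') && (res qs y == res qs x))
        A (idx x) (idx y).

(* |0>_qs (x) |psi>_{V \ qs} *)
Definition tens0 (n t : nat) (qs : t.-tuple 'I_n) (psi : 'cV[C]_(cdim qs))
  : 'cV[C]_(qdim n) :=
  \col_i (if res qs (st i) == [ffun _ => false]
          then psi (enum_rank (resc qs (st i))) 0 else 0).

Arguments tens0 {n t} qs psi.

Definition zero_idx (t : nat) : 'I_(qdim t) := @idx t [ffun _ => false].

Inductive prog (n : nat) : Type :=
| Skip
| Init (t : nat) (qs : t.-tuple 'I_n)
| Unit (t : nat) (qs : t.-tuple 'I_n) (U : 'M[C]_(qdim t))
| Assert (t : nat) (qs : t.-tuple 'I_n) (P : vset (qdim t))
| Seq (S0 S1 : prog n)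
| If (t : nat) (qs : t.-tuple 'I_n) (P : vset (qdim t)) (S1 S0 : prog n)
| While (t : nat) (qs : t.-tuple 'I_n) (P : vset (qdim t)) (S : prog n).

Fixpoint wf (n : nat) (S : prog n) : Prop :=
  match S with
  | Skip => True
  | Init _ qs => uniq qs
  | Unit _ qs U => uniq qs /\ unitary U
  | Assert _ qs P => uniq qs /\ is_subspace P
  | Seq S0 S1 => wf S0 /\ wf S1
  | If _ qs P S1 S0 => uniq qs /\ is_subspace P /\ wf S1 /\ wf S0
  | While _ qs P B => uniq qs /\ is_subspace P /\ wf B
  end.

Definition sem_init (n t : nat) (qs : t.-tuple 'I_n) (rho : 'M[C]_(qdim n)) :=
  \sum_(i < qdim t) ext qs (delta_mx (zero_idx t) i) *m rho
                     *m ext qs (delta_mx i (zero_idx t)).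
Definition sem_unit (n t : nat) (qs : t.-tuple 'I_n) (U : 'M[C]_(qdim t)) rho :=
  ext qs U *m rho *m dag (ext qs U).
Definition sem_assert (n t : nat) (qs : t.-tuple 'I_n) (P : vset (qdim t)) rho :=
  ext qs (projmx P) *m rho *m ext qs (projmx P).

Fixpoint sem (n : nat) (S : prog n) : 'M[C]_(qdim n) -> 'M[C]_(qdim n) :=
  match S with
  | Skip => fun rho => rho
  | Init _ qs => sem_init qs
  | Unit _ qs U => sem_unit qs U
  | Assert _ qs P => sem_assert qs P
  | Seq S0 S1 => fun rho => sem S1 (sem S0 rho)
  | If _ qs P S1 S0 => fun rho =>
      sem S1 (sem_assert qs P rho) + sem S0 (sem_assert qs (ortho P) rho)
  | While _ qs P B => fun rho =>
      limmx (fun N => \sum_(i < N)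
        sem_assert qs (ortho P) (iter i (fun r => sem B (sem_assert qs P r)) rho))
  end.

Definition alpha_s (n : nat) (Rs : 'M[C]_(qdim n) -> Prop) : vset (qdim n) :=
  span (fun v => exists rho, Rs rho /\ supp rho v).

Definition gamma_s (n : nat) (P : vset (qdim n)) : 'M[C]_(qdim n) -> Prop :=
  fun rho => pdo rho /\ (forall v, supp rho v -> P v).

Definition liftset (n : nat) (f : 'M[C]_(qdim n) -> 'M[C]_(qdim n))
  (Rs : 'M[C]_(qdim n) -> Prop) : 'M[C]_(qdim n) -> Prop :=
  fun sigma => exists rho, Rs rho /\ sigma = f rho.

Definition complete_abstraction (n : nat) (f : 'M[C]_(qdim n) -> 'M[C]_(qdim n))
  (fs : vset (qdim n) -> vset (qdim n)) : Prop :=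
  forall Rs : 'M[C]_(qdim n) -> Prop, (forall rho, Rs rho -> pdo rho) ->
    alpha_s (liftset f Rs) = fs (alpha_s Rs).

Definition abs_skip (n : nat) (Q : vset (qdim n)) : vset (qdim n) := Q.
Definition abs_init (n t : nat) (qs : t.-tuple 'I_n) (Q : vset (qdim n)) : vset (qdim n) :=
  fun v => exists psi, supp (ptrace qs (projmx Q)) psi /\ v = tens0 qs psi.
Definition abs_unit (n t : nat) (qs : t.-tuple 'I_n) (U : 'M[C]_(qdim t))
  (Q : vset (qdim n)) : vset (qdim n) :=
  fun v => exists psi, Q psi /\ v = ext qs U *m psi.
Definition abs_assert (n t : nat) (qs : t.-tuple 'I_n) (P : vset (qdim t))
  (Q : vset (qdim n)) : vset (qdim n) :=
  span (fun v => exists psi, Q psi /\ v = ext qs (projmx P) *m psi).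
Definition abs_kraus (n : nat) (K : finType) (E : K -> 'M[C]_(qdim n))
  (Q : vset (qdim n)) : vset (qdim n) :=
  span (fun v => exists k psi, Q psi /\ v = E k *m psi).

End QDefs.

From Pilot Require Import Defs.
From HB Require Import structures.
From mathcomp Require Import all_boot all_order all_algebra.
From mathcomp Require Import complex reals.
From Stdlib Require Import ClassicalEpsilon Classical FunctionalExtensionality PropExtensionality.
From mathcomp Require Import ring zify.
Set Implicit Arguments. Unset Strict Implicit. Unset Printing Implicit Defensive.
Import Order.TTheory GRing.Theory Num.Theory.
Local Open Scope ring_scope.

(* Every command denotes a Kraus map, and for a positive [rho] the support of
   [sum_k E_k rho E_k^*] is the span of the images [E_k (supp rho)]: if [u] is
   orthogonal to that support then [sum_k <E_k^* u, rho E_k^* u> = 0], so each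
   [rho E_k^* u] vanishes.  As [alpha_s] takes the span of supports, it commutes
   with every Kraus map.  Skip, unitaries and assertions are Kraus maps with the
   single operator [1], [U] or the projector onto [P].  Initialisation has the
   Kraus operators [|0><i|_qs (x) I = (|0>_qs (x) I) (<i|_qs (x) I)], and the
   partial trace of the projector [Q] is [sum_i (<i|_qs (x) I) Q (|i>_qs (x) I)],
   whose support is therefore spanned by the vectors [(<i|_qs (x) I) psi], [psi] in [Q]. *)

Section Adjoint.
Variable R : realType.
Local Notation C := (R[i]).

Lemma dagE m p (A : 'M[C]_(m, p)) i j : dag A i j = (A j i)^*.
Proof. by rewrite /dag !mxE. Qed.

Lemma dagK m p (A : 'M[C]_(m, p)) : dag (dag A) = A.
Proof. by apply/matrixP=> i j; rewrite !dagE conjCK. Qed.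

Lemma dagD m p (A B : 'M[C]_(m, p)) : dag (A + B) = dag A + dag B.
Proof. by rewrite /dag map_mxD linearD. Qed.

Lemma dagZ m p (a : C) (A : 'M[C]_(m, p)) : dag (a *: A) = a^* *: dag A.
Proof. by apply/matrixP=> i j; rewrite !dagE !mxE rmorphM. Qed.

Lemma dag0 m p : dag (0 : 'M[C]_(m, p)) = 0.
Proof. by rewrite /dag map_mx0 trmx0. Qed.

Lemma dagM m p q (A : 'M[C]_(m, p)) (B : 'M[C]_(p, q)) :
  dag (A *m B) = dag B *m dag A.
Proof. by rewrite /dag map_mxM trmx_mul. Qed.

Lemma dag1 m : dag (1%:M : 'M[C]_m) = 1%:M.
Proof. by rewrite /dag map_mx1 trmx1. Qed.

Lemma dag_delta m p (i : 'I_m) (j : 'I_p) :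
  dag (delta_mx i j : 'M[C]_(m, p)) = delta_mx j i.
Proof. by rewrite /dag map_delta_mx trmx_delta. Qed.

Lemma dag_ext n t (qs : t.-tuple 'I_n) (A : 'M[C]_(qdim t)) :
  dag (ext qs A) = ext qs (dag A).
Proof.
apply/matrixP => i j; rewrite dagE !mxE eq_sym.
by case: ifP => _; rewrite ?dagE ?rmorph0.
Qed.

End Adjoint.

Section Subspaces.
Variable R : realType.
Local Notation C := (R[i]).

Lemma vset_ext m (X Y : vset R m) : (forall v, X v <-> Y v) -> X = Y.
Proof. by move=> XY; apply: functional_extensionality => v; apply: propositional_extensionality. Qed.

Lemma span_gen m (X : vset R m) v : X v -> Defs.span X v.
Proof.
by move=> Xv; exists 1%N, (fun _ => v), (fun _ => 1); rewrite big_ord1 scale1r.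
Qed.

Lemma span_subspace m (X : vset R m) : is_subspace (Defs.span X).
Proof.
split; first by exists 0%N, (fun _ => 0), (fun _ => 0); rewrite big_ord0; split => // -[].
split=> [u v [k1 [w1 [c1 [X1 ->]]]] [k2 [w2 [c2 [X2 ->]]]]|a u [k [w [c [Xw ->]]]]].
  pose w i := match split i with inl i1 => w1 i1 | inr i2 => w2 i2 end.
  pose c i := match split i with inl i1 => c1 i1 | inr i2 => c2 i2 end.
  exists (k1 + k2)%N, w, c; split; first by move=> i; rewrite /w; case: split.
  by rewrite big_split_ord /w /c; congr (_ + _); apply: eq_bigr => i _;
    rewrite ?(unsplitK (inl i)) ?(unsplitK (inr i)).
exists k, w, (fun i => a * c i); split => //.
by rewrite scaler_sumr; apply: eq_bigr => i _; rewrite scalerA.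
Qed.

Lemma subspace_sum m (Y : vset R m) (I : finType) (F : I -> 'cV[C]_m) :
  is_subspace Y -> (forall i, Y (F i)) -> Y (\sum_i F i).
Proof. by case=> Y0 [YD _] YF; apply: big_ind. Qed.

Lemma span_min m (X Y : vset R m) : is_subspace Y -> (forall w, X w -> Y w) ->
  forall v, Defs.span X v -> Y v.
Proof.
move=> SY XY v [k [w [c [Xw ->]]]].
by apply: subspace_sum => // i; case: SY => _ [_ YZ]; apply/YZ/XY.
Qed.

Lemma span_mono m (X Y : vset R m) : (forall w, X w -> Defs.span Y w) ->
  forall v, Defs.span X v -> Defs.span Y v.
Proof. by move=> XY; apply: span_min => //; apply: span_subspace. Qed.

Lemma span_id m (X : vset R m) : is_subspace X -> Defs.span X = X.
Proof. by move=> SX; apply: vset_ext => v; split; [apply: span_min | apply: span_gen]. Qed.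

Lemma supp_subspace m (M : 'M[C]_m) : is_subspace (supp M).
Proof.
split; first by exists 0; rewrite mulmx0.
split=> [u v [a ->] [b ->]|a u [w ->]]; first by exists (a + b); rewrite mulmxDr.
by exists (a *: w); rewrite scalemxAr.
Qed.

Lemma img_subspace p m (A : 'M[C]_(p, m)) (Q : vset R m) : is_subspace Q ->
  is_subspace (fun v => exists psi, Q psi /\ v = A *m psi).
Proof.
case=> Q0 [QD QZ]; split; first by exists 0; rewrite mulmx0.
split=> [_ _ [a [Qa ->]] [b [Qb ->]]|c _ [a [Qa ->]]].
  by exists (a + b); rewrite mulmxDr; split => //; apply: QD.
by exists (c *: a); rewrite scalemxAr; split => //; apply: QZ.
Qed.

Lemma preim_subspace p m (A : 'M[C]_(p, m)) (Y : vset R p) :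
  is_subspace Y -> is_subspace (fun v => Y (A *m v)).
Proof.
case=> Y0 [YD YZ]; split; first by rewrite mulmx0.
split=> [u v Yu Yv|a u Yu]; first by rewrite mulmxDr; apply: YD.
by rewrite -scalemxAr; apply: YZ.
Qed.

Lemma span_img p m (A : 'M[C]_(p, m)) (X : vset R m) :
  Defs.span (fun v => exists psi, X psi /\ v = A *m psi) =
  (fun v => exists psi, Defs.span X psi /\ v = A *m psi).
Proof.
apply: vset_ext => v; split.
  apply: (span_min (img_subspace A (span_subspace X))).
  by move=> _ [psi [Xpsi ->]]; exists psi; split => //; apply: span_gen.
move=> [psi [Xpsi ->]]; move: psi Xpsi.
apply: (span_min (preim_subspace A (span_subspace _))).
by move=> psi Xpsi; apply: span_gen; exists psi.
Qed.

End Subspaces.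

Section Positive.
Variable R : realType.
Local Notation C := (R[i]).

Definition qf m (A : 'M[C]_m) (x y : 'cV[C]_m) : C := (dag x *m A *m y) 0 0.

Definition psd m (A : 'M[C]_m) := forall v, 0 <= qf A v v.

Lemma qf_delta m (A : 'M[C]_m) i j : qf A (delta_mx i 0) (delta_mx j 0) = A i j.
Proof. by rewrite /qf dag_delta -rowE -colE !mxE. Qed.

Lemma qfB m (A B : 'M[C]_m) x y : qf (A - B) x y = qf A x y - qf B x y.
Proof. by rewrite /qf mulmxBr mulmxBl !mxE. Qed.

Lemma qf_dag m (A : 'M[C]_m) x y : (qf A x y)^* = qf (dag A) y x.
Proof. by rewrite -dagE /qf !dagM dagK mulmxA. Qed.

Lemma qf_expand m (A : 'M[C]_m) x y (s : C) :
  qf A (x + s *: y) (x + s *: y) =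
  qf A x x + s * qf A x y + s^* * qf A y x + s^* * s * qf A y y.
Proof.
rewrite /qf dagD dagZ !mulmxDl !mulmxDr -!scalemxAl -!scalemxAr !mxE.
ring.
Qed.

Lemma normsq_ge0 m (w : 'cV[C]_m) : 0 <= (dag w *m w) 0 0.
Proof. by rewrite mxE; apply: sumr_ge0 => i _; rewrite dagE mulrC mul_conjC_ge0. Qed.

Lemma normsq_eq0 m (w : 'cV[C]_m) : (dag w *m w) 0 0 = 0 -> w = 0.
Proof.
rewrite mxE => /psumr_eq0P w0; apply/matrixP => i j; rewrite (ord1 j) mxE.
have /(_ i isT)/eqP : forall k, true -> dag w 0 k * w k 0 = 0.
  by apply: w0 => k _; rewrite dagE mulrC mul_conjC_ge0.
by rewrite dagE mulrC mul_conjC_eq0 => /eqP.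
Qed.

Lemma psd_gram m p (A : 'M[C]_(m, p)) : psd (A *m dag A).
Proof.
move=> v; rewrite /qf (_ : _ *m v = dag (dag A *m v) *m (dag A *m v)) ?normsq_ge0 //.
by rewrite dagM dagK !mulmxA.
Qed.

Lemma psd_herm m (A : 'M[C]_m) : psd A -> dag A = A.
Proof.
move=> psdA; pose H := A - dag A.
have Hvv v : qf H v v = 0 by rewrite qfB -qf_dag (geC0_conj (psdA v)) subrr.
have Hxy x y : qf H x y = 0.
  have e1 := qf_expand H x y 1; have e2 := qf_expand H x y 'i.
  rewrite !Hvv rmorph1 in e1 e2; rewrite conjCi in e2.
  have sum0 : qf H x y + qf H y x = 0 by rewrite [RHS]e1; ring.
  have dif0 : 'i * qf H x y - 'i * qf H y x = 0 by rewrite [RHS]e2; ring.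
  have : 'i * (2 * qf H x y) = 'i * (qf H x y + qf H y x) + ('i * qf H x y - 'i * qf H y x)
    by ring.
  rewrite sum0 dif0 mulr0 addr0 => /eqP.
  by rewrite !mulf_eq0 pnatr_eq0 (negbTE (neq0Ci _)) => /eqP.
apply/esym/eqP; rewrite -subr_eq0; apply/eqP/matrixP => i j.
by rewrite -(qf_delta H) Hxy mxE.
Qed.

(* With [w = A y], [N = |w|^2] and [c = qf A w w], the form at [y - s w] for
   [s = N / (c + 1)] equals [- N^2 (c + 2) / (c + 1)^2], which forces [N = 0]. *)
Lemma psd_qf_eq0 m (A : 'M[C]_m) y : psd A -> qf A y y = 0 -> A *m y = 0.
Proof.
move=> psdA Ay0; set w := A *m y.
set N := (dag w *m w) 0 0; set c := qf A w w.
have N0 : 0 <= N := normsq_ge0 w.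
have c0 : 0 <= c := psdA w.
have Eyw : qf A y w = N by rewrite /qf /N /w dagM (psd_herm psdA).
have Ewy : qf A w y = N by rewrite /qf /N /w -mulmxA.
have c1 : 0 < c + 1 by rewrite ltr_wpDl.
have c2 : 0 < c + 2 by rewrite ltr_wpDl.
set s := N / (c + 1).
have sC : (- s)^* = - s.
  by apply/conj_Creal; rewrite rpredN ger0_real // divr_ge0 // ltW.
have := psdA (y + (- s) *: w); rewrite qf_expand Ay0 Eyw Ewy -/c sC.
have -> : 0 + - s * N + - s * N + - s * - s * c = - (N ^+ 2 * (c + 2) / (c + 1) ^+ 2).
  by rewrite /s; field; rewrite gt_eqF.
rewrite oppr_ge0 => le0.
have ge0 : 0 <= N ^+ 2 * (c + 2) / (c + 1) ^+ 2.
  by rewrite divr_ge0 ?mulr_ge0 ?exprn_ge0 // ltW.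
have /eqP : N ^+ 2 * (c + 2) / (c + 1) ^+ 2 = 0 by apply: le_anti; rewrite le0 ge0.
rewrite !mulf_eq0 invr_eq0 !expf_eq0 /= (gt_eqF c1) (gt_eqF c2) !orbF orbb.
by move/eqP; apply: normsq_eq0.
Qed.

End Positive.

Section Kraus.
Variable R : realType.
Local Notation C := (R[i]).

Lemma colspace_sub p a b (M : 'M[C]_(p, a)) (X : 'M[C]_(p, b)) :
  (forall u : 'rV[C]_p, u *m M = 0 -> u *m X = 0) -> exists D, X = M *m D.
Proof.
move=> ann; have kerM : (cokermx M^T)^T *m M = 0.
  by apply: trmx_inj; rewrite trmx_mul trmxK mulmx_coker trmx0.
have : (cokermx M^T)^T *m X = 0.
  by apply/row_matrixP => i; rewrite row_mul row0 ann // -row_mul kerM row0.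
move=> /(congr1 trmx); rewrite trmx_mul trmxK trmx0 => /eqP.
rewrite -submxE => /submxP [D XD]; exists D^T.
by rewrite -[X]trmxK XD trmx_mul trmxK.
Qed.

Lemma supp_kraus p m (K : finType) (E : K -> 'M[C]_(p, m)) (rho : 'M[C]_m) :
  psd rho ->
  supp (\sum_k E k *m rho *m dag (E k)) =
  Defs.span (fun v => exists k w, supp rho w /\ v = E k *m w).
Proof.
move=> psd_rho; set M := \sum_k _; apply: vset_ext => v; split.
  move=> [z ->]; rewrite /M mulmx_suml.
  apply: subspace_sum => [|k]; first exact: span_subspace.
  apply: span_gen; exists k, (rho *m (dag (E k) *m z)); split; first by exists (dag (E k) *m z).
  by rewrite !mulmxA.
apply: span_min; first exact: supp_subspace.
move=> _ [k [w [[z ->] ->]]].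
suff [D ED] : exists D, E k *m rho = M *m D.
  by exists (D *m z); rewrite mulmxA ED mulmxA.
apply: colspace_sub => u uM0.
have : \sum_l qf rho (dag (u *m E l)) (dag (u *m E l)) = 0.
  rewrite -[RHS](_ : (u *m M *m dag u) 0 0 = 0); last by rewrite uM0 mul0mx mxE.
  rewrite /M mulmx_sumr mulmx_suml summxE; apply: eq_bigr => l _.
  by rewrite /qf dagK dagM !mulmxA.
move=> /(psumr_eq0P (fun l _ => psd_rho _)) /(_ k isT) /(psd_qf_eq0 psd_rho).
by move=> /(congr1 (@dag R _ _)); rewrite dagM dagK (psd_herm psd_rho) dag0 mulmxA.
Qed.

Lemma abs_kraus_span n (K : finType) (E : K -> 'M[C]_(qdim n)) (X : vset R (qdim n)) :
  abs_kraus E (Defs.span X) = abs_kraus E X.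
Proof.
apply: vset_ext => v; split; apply: span_mono => _ [k [psi [Xpsi ->]]]; last first.
  by apply: span_gen; exists k, psi; split => //; apply: span_gen.
move: psi Xpsi; apply: (span_min (preim_subspace (E k) (span_subspace _))).
by move=> psi Xpsi; apply: span_gen; exists k, psi.
Qed.

Lemma ca_kraus n (f : 'M[C]_(qdim n) -> 'M[C]_(qdim n)) (K : finType)
    (E : K -> 'M[C]_(qdim n)) :
  (forall rho, pdo rho -> f rho = \sum_k E k *m rho *m dag (E k)) ->
  complete_abstraction f (abs_kraus E).
Proof.
move=> fE Rs Rs_pdo; rewrite /alpha_s abs_kraus_span; apply: vset_ext => v.
split; apply: span_mono.
  move=> w [_ [[rho [Rrho ->]] rho_w]].
  move: rho_w; rewrite (fE _ (Rs_pdo _ Rrho)) (supp_kraus _ (Rs_pdo _ Rrho).1).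
  apply: span_mono => _ [k [w' [rho_w' ->]]].
  by apply: span_gen; exists k, w'; split => //; exists rho.
move=> _ [k [w [[rho [Rrho rho_w]] ->]]].
apply: span_gen; exists (f rho); split; first by exists rho.
rewrite (fE _ (Rs_pdo _ Rrho)) (supp_kraus _ (Rs_pdo _ Rrho).1).
by apply: span_gen; exists k, w.
Qed.

Lemma abs_kraus1 n (A : 'M[C]_(qdim n)) (Q : vset R (qdim n)) :
  abs_kraus (fun _ : 'I_1 => A) Q = Defs.span (fun v => exists psi, Q psi /\ v = A *m psi).
Proof.
apply: vset_ext => v; split; apply: span_mono.
  by move=> _ [_ [psi [Qpsi ->]]]; apply: span_gen; exists psi.
by move=> _ [psi [Qpsi ->]]; apply: span_gen; exists ord0, psi.
Qed.

End Kraus.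

Section Projection.
Variable R : realType.
Local Notation C := (R[i]).

Lemma subspace_rowspace m (P : vset R m) : is_subspace P ->
  exists r (B : 'M[C]_(r, m)), forall v, P v <-> (v^T <= B)%MS.
Proof.
move=> [P0 [PD PZ]].
have finish r (B : 'M[C]_(r, m)) : (forall u, (u <= B)%MS -> P u^T) ->
    ~ (exists v, P v /\ ~~ (v^T <= B)%MS) ->
    exists r (B : 'M[C]_(r, m)), forall v, P v <-> (v^T <= B)%MS.
  move=> BP no; exists r, B => v; split => [Pv|/BP]; last by rewrite trmxK.
  by apply: NNPP => vB; apply: no; exists v; split => //; apply/negP.
have grow r (B : 'M[C]_(r, m)) v : P v -> ~~ (v^T <= B)%MS ->
    (forall u, (u <= B)%MS -> P u^T) ->
    (B < col_mx B v^T)%MS /\ (forall u, (u <= col_mx B v^T)%MS -> P u^T).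
  move=> Pv vB BP; split.
    by rewrite ltmxE col_mx_sub submx_refl (negbTE vB) andbF -addsmxE addsmxSl.
  move=> u; rewrite -addsmxE => /sub_addsmxP [[u1 u2] /= ->].
  have /sub_rVP [a ->] : (u2 *m v^T <= v^T)%MS by apply: submxMl.
  by rewrite linearD /= linearZ /= trmxK; apply: PD; [apply/BP/submxMl | apply: PZ].
suff: forall k r (B : 'M[C]_(r, m)), (m - \rank B <= k)%N ->
    (forall u, (u <= B)%MS -> P u^T) ->
    exists r (B : 'M[C]_(r, m)), forall v, P v <-> (v^T <= B)%MS.
  move/(_ m m 0); apply; first by rewrite leq_subr.
  by move=> u; rewrite submx0 => /eqP ->; rewrite trmx0.
elim=> [|k IH] r B rkB BP;
  (have [[v [Pv vB]]|no] := classic (exists v, P v /\ ~~ (v^T <= B)%MS);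
   last exact: finish BP no).
  have [/rank_ltmx ltB _] := grow _ _ _ Pv vB BP.
  by have := rank_leq_col (col_mx B v^T); lia.
have [/rank_ltmx ltB BvP] := grow _ _ _ Pv vB BP.
by apply: (IH _ _ _ BvP); have := rank_leq_col (col_mx B v^T); lia.
Qed.

(* [W W^*] is the projector when the columns of [W] are an orthonormal basis of [P];
   the basis comes from Gram-Schmidt. *)
Lemma projmxP m (P : vset R m) : is_subspace P -> is_proj_onto (projmx P) P.
Proof.
move=> SP; apply: (epsilon_spec _ (fun M : 'M[C]_m => is_proj_onto M P)).
have [r [B PB]] := subspace_rowspace SP.
set S := schmidt (row_base B).
have SS : S *m (S ^t* )%sesqui = 1%:M.
  by apply/unitarymxP/schmidt_unitarymx/rank_leq_col.
have SB : (S :=: B)%MS.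
  by apply: eqmx_trans (eq_row_base B); apply/eqmx_schmidt_free/row_base_free.
set W := S^T.
have WW : dag W *m W = 1%:M.
  have -> : dag W = (S ^t* )%sesqui^T by apply/matrixP => i j; rewrite !mxE.
  by rewrite -trmx_mul SS trmx1.
exists (W *m dag W); split; first by rewrite dagM dagK.
split; first by rewrite mulmxA -(mulmxA W) WW mulmx1.
move=> v; split => [[w ->]|].
  by apply/PB; rewrite -SB -mulmxA trmx_mul trmxK submxMl.
move/PB; rewrite -SB => /submxP [x vx].
have -> : v = W *m x^T by rewrite /W -trmx_mul -vx trmxK.
by exists (W *m x^T); rewrite -mulmxA (mulmxA (dag W)) WW mul1mx.
Qed.

Lemma projmx_dag m (P : vset R m) : is_subspace P -> dag (projmx P) = projmx P.
Proof. by case/projmxP. Qed.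

Lemma supp_projmx m (P : vset R m) : is_subspace P -> supp (projmx P) = P.
Proof. by case/projmxP => _ [_ suppP]; apply: vset_ext. Qed.

Lemma psd_projmx m (P : vset R m) : is_subspace P -> psd (projmx P).
Proof. by case/projmxP => dagP [PP _]; rewrite -PP -{2}dagP; apply: psd_gram. Qed.

End Projection.

Section BasicCommands.
Variable R : realType.
Local Notation C := (R[i]).

Lemma abs_kraus1_subspace n (A : 'M[C]_(qdim n)) (Q : vset R (qdim n)) :
  is_subspace Q -> abs_kraus (fun _ : 'I_1 => A) Q = (fun v => exists psi, Q psi /\ v = A *m psi).
Proof. by move=> SQ; rewrite abs_kraus1 span_id //; apply: img_subspace. Qed.

Lemma ca_skip n : complete_abstraction (sem (Skip R n)) (@abs_skip R n).
Proof.
move=> Rs Rs_pdo; rewrite (@ca_kraus _ _ _ _ (fun _ : 'I_1 => 1%:M) _ Rs Rs_pdo); last first.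
  by move=> rho _; rewrite big_ord1 dag1 mul1mx mulmx1.
rewrite abs_kraus1_subspace; last exact: span_subspace.
by apply: vset_ext => v; split => [[psi [Qpsi ->]]|Qv]; [rewrite mul1mx | exists v; rewrite mul1mx].
Qed.

Lemma ca_unit n t (qs : t.-tuple 'I_n) (U : 'M[C]_(qdim t)) :
  complete_abstraction (sem (Unit qs U)) (abs_unit qs U).
Proof.
move=> Rs Rs_pdo; rewrite (@ca_kraus _ _ _ _ (fun _ : 'I_1 => ext qs U) _ Rs Rs_pdo).
  by rewrite abs_kraus1_subspace //; apply: span_subspace.
by move=> rho _; rewrite big_ord1.
Qed.

Lemma ca_assert n t (qs : t.-tuple 'I_n) (P : vset R (qdim t)) :
  is_subspace P -> complete_abstraction (sem (Assert qs P)) (abs_assert qs P).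
Proof.
move=> SP Rs Rs_pdo.
rewrite (@ca_kraus _ _ _ _ (fun _ : 'I_1 => ext qs (projmx P)) _ Rs Rs_pdo) ?abs_kraus1 //.
by move=> rho _; rewrite big_ord1 dag_ext projmx_dag.
Qed.

End BasicCommands.

Section Initialisation.
Variable R : realType.
Local Notation C := (R[i]).
Variables (n t : nat) (qs : t.-tuple 'I_n).
Hypothesis qs_uniq : uniq qs.

Lemma idx_eqE m (u : bst m) i : (idx u == i) = (u == st i).
Proof. by apply/eqP/eqP => [<-|->]; rewrite /idx /st ?enum_rankK ?enum_valK. Qed.

Lemma eq_idxE m (u : bst m) i : (i == idx u) = (st i == u).
Proof. by rewrite eq_sym idx_eqE eq_sym. Qed.

(* The assignment to [V] agreeing with [a] on [qs] and with [c] elsewhere. *)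
Definition join (a : bst t) (c : cbst qs) : bst n :=
  [ffun v => if insub v is Some w then c w else nth false (fgraph a) (index v qs)].

Lemma res_join a c : res qs (join a c) = a.
Proof.
apply/ffunP => j; rewrite !ffunE insubF ?mem_tnth //.
by rewrite (tnth_nth (tnth qs j)) index_uniq ?size_tuple // nth_fgraph_ord.
Qed.

Lemma resc_join a c : resc qs (join a c) = c.
Proof. by apply/ffunP => w; rewrite !ffunE valK. Qed.

Lemma join_res x : join (res qs x) (resc qs x) = x.
Proof.
apply/ffunP => v; rewrite !ffunE; case: insubP => [w _ <-|]; first by rewrite ffunE.
rewrite negbK => vqs; have lt_v : (index v qs < t)%N by rewrite -{2}(size_tuple qs) index_mem.
by rewrite (nth_fgraph_ord false (Ordinal lt_v)) ffunE (tnth_nth v) /= nth_index.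
Qed.

Lemma join_eqE x a c : (x == join a c) = (res qs x == a) && (resc qs x == c).
Proof.
apply/eqP/andP => [->|[/eqP <- /eqP <-]]; last by rewrite join_res.
by rewrite res_join resc_join.
Qed.

(* [tens0_mx] is [|0>_qs (x) I] and [slice_mx a] is [<a|_qs (x) I]. *)
Definition tens0_mx : 'M[C]_(qdim n, cdim qs) :=
  \matrix_(i, c) ((res qs (st i) == [ffun _ => false]) && (resc qs (st i) == enum_val c))%:R.

Definition slice_mx (a : bst t) : 'M[C]_(cdim qs, qdim n) :=
  \matrix_(c, i) (i == idx (join a (enum_val c)))%:R.

Lemma tens0E (psi : 'cV[C]_(cdim qs)) : @tens0 R n t qs psi = tens0_mx *m psi.
Proof.
apply/matrixP => x z; rewrite (ord1 z) !mxE.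
under eq_bigr do rewrite mxE.
case: eqP => _ /=; last by rewrite big1 // => c _; rewrite mul0r.
rewrite (bigD1 (enum_rank (resc qs (st x)))) //= enum_rankK eqxx mul1r big1 ?addr0 //.
move=> c ne; rewrite (_ : (_ == enum_val c) = false) ?mul0r //.
by apply/eqP => ec; move: ne; rewrite ec enum_valK eqxx.
Qed.

Lemma ptrace_kraus (A : 'M[C]_(qdim n)) :
  ptrace qs A = \sum_a slice_mx a *m A *m dag (slice_mx a).
Proof.
apply/matrixP => c c'; rewrite summxE mxE.
have sliceE a d (B : 'M[C]_(qdim n, d)) j :
    (slice_mx a *m B) c j = B (idx (join a (enum_val c))) j.
  by rewrite mxE (bigD1 (idx (join a (enum_val c)))) //= mxE eqxx mul1r big1 ?addr0 //
    => i /negbTE ni; rewrite mxE ni mul0r.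
transitivity (\sum_(x | resc qs x == enum_val c) A (idx x) (idx (join (res qs x) (enum_val c')))).
  apply: eq_bigr => x _; rewrite (big_pred1 (join (res qs x) (enum_val c'))) // => y.
  by rewrite /= join_eqE andbC.
rewrite (reindex_onto (fun a => join a (enum_val c)) (res qs)); last first.
  by move=> x /eqP <-; rewrite join_res.
rewrite (eq_bigl xpredT) => [|a]; last by rewrite resc_join res_join !eqxx.
apply: eq_bigr => a _; rewrite res_join -mulmxA sliceE.
rewrite mxE (bigD1 (idx (join a (enum_val c')))) //= dagE mxE eqxx big1 ?addr0.
  by rewrite rmorph1 mulr1.
by move=> i /negbTE ni; rewrite dagE mxE ni rmorph0 mulr0.
Qed.

Lemma init_kraus (i : 'I_(qdim t)) :
  ext qs (delta_mx (zero_idx t) i) = tens0_mx *m slice_mx (st i).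
Proof.
apply/matrixP => x y; rewrite !mxE; under eq_bigr do rewrite !mxE.
rewrite (bigD1 (enum_rank (resc qs (st x)))) //= enum_rankK eqxx andbT big1 ?addr0; last first.
  move=> c ne; rewrite (_ : (_ == enum_val c) = false) ?andbF ?mul0r //.
  by apply/eqP => ec; move: ne; rewrite ec enum_valK eqxx.
rewrite eq_idxE join_eqE !idx_eqE [resc _ (st y) == _]eq_sym.
have -> : st (zero_idx t) = [ffun=> false] by rewrite /st /zero_idx /idx enum_rankK.
case: (resc qs (st x) == _); case: (res qs (st x) == _); case: (res qs (st y) == _);
  by rewrite /= ?mulr1 ?mul0r ?mulr0.
Qed.

Lemma ca_init : complete_abstraction (sem (Init R qs)) (abs_init qs).
Proof.
move=> Rs Rs_pdo; pose E i := ext qs (delta_mx (zero_idx t) i : 'M[C]_(qdim t)).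
rewrite (@ca_kraus _ _ _ _ E _ Rs Rs_pdo); last first.
  by move=> rho _; apply: eq_bigr => i _; rewrite /E dag_ext dag_delta.
set Q := alpha_s Rs; have SQ : is_subspace Q by apply: span_subspace.
pose G u := exists a w, Q w /\ u = slice_mx a *m w.
have suppQ : supp (ptrace qs (projmx Q)) = Defs.span G.
  by rewrite ptrace_kraus supp_kraus ?supp_projmx //; apply: psd_projmx.
transitivity (Defs.span (fun v => exists u, G u /\ v = tens0_mx *m u)).
  rewrite /abs_kraus; congr Defs.span; apply: vset_ext => v; split.
    move=> [i [w [Qw ->]]]; exists (slice_mx (st i) *m w).
    by rewrite /E init_kraus mulmxA; split => //; exists (st i), w.
  move=> [_ [[a [w [Qw ->]]] ->]]; exists (idx a), w.
  by rewrite /E init_kraus /st /idx enum_rankK mulmxA.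
rewrite span_img -suppQ; apply: vset_ext => v.
by split=> -[psi [supp_psi ->]]; exists psi; rewrite tens0E.
Qed.

End Initialisation.

Theorem mainTheorem17 (R : realType) (n : nat) :
  complete_abstraction (sem (Skip R n)) (@abs_skip R n)
  /\ (forall (t : nat) (qs : t.-tuple 'I_n), uniq qs ->
        complete_abstraction (sem (Init R qs)) (abs_init qs))
  /\ (forall (t : nat) (qs : t.-tuple 'I_n) (U : 'M[R[i]]_(qdim t)),
        uniq qs -> unitary U ->
        complete_abstraction (sem (Unit qs U)) (abs_unit qs U))
  /\ (forall (t : nat) (qs : t.-tuple 'I_n) (P : vset R (qdim t)),
        uniq qs -> is_subspace P ->
        complete_abstraction (sem (Assert qs P)) (abs_assert qs P))
  /\ (forall (S : prog R n) (K : finType) (E : K -> 'M[R[i]]_(qdim n)),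
        wf S ->
        (forall rho, pdo rho -> sem S rho = \sum_(k : K) E k *m rho *m dag (E k)) ->
        complete_abstraction (sem S) (abs_kraus E)).
Proof.
split; first exact: ca_skip.
split; first by move=> t qs qs_uniq; apply: ca_init.
split; first by move=> t qs U _ _; apply: ca_unit.
split; first by move=> t qs P _ SP; apply: ca_assert.
by move=> S K E _ semE; apply: ca_kraus.
Qed.
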